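(* Let $(\Omega,\mathcal A)$ be a measurable space admitting a universally consistent learning rule $\mathcal L$. Then for every subset $Y\subseteq\Omega$, the restriction $\mathcal L|_Y$ is a universally consistent learning rule for the measurable subspace $(Y,\mathcal A|_Y)$, where $\mathcal A|_Y=\{A\cap Y: A\in\mathcal A\}$.
   Context: For a measurable space $(\Omega,\mathcal A)$, give $\Omega\times\{0,1\}$ the product $\sigma$-algebra. A classifier is a measurable map $T:\Omega\to\{0,1\}$. A learning rule $\mathcal L$ is a family of maps $\mathcal L_n:\Omega^n\times\{0,1\}^n\times\Omega\to\{0,1\}$, $(\sigma,x)\mapsto\mathcal L_n(\sigma)(x)$, $n\ge1$, each measurable with respect to the product $\sigma$-algebra. For a probability measure $\tilde\mu$ on $\Omega\times\{0,1\}$, $\mathrm{err}_{\tilde\mu}(\mathcal L_n)=(\tilde\mu^n\otimes\tilde\mu)\{(\sigma,x,y):\mathcal L_n(\sigma)(x)\ne y\}$, and the Bayes error is $\ell^*(\tilde\mu)=\inf_T\tilde\mu\{(x,y):T(x)\ne y\}$ over all classifiers $T$. $\mathcal L$ is universally consistent if $\mathrm{err}_{\tilde\mu}(\mathcal L_n)\to\ell^*(\tilde\mu)$ as $n\to\infty$ for every probability measure $\tilde\mu$ on $\Omega\times\{0,1\}$. The restriction $\mathcal L|_Y$ is defined by $(\mathcal L|_Y)_n=\mathcal L_n|_{Y^n\times\{0,1\}^n\times Y}$. *)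

From HB Require Import structures.
From mathcomp Require Import all_boot all_order all_algebra.
From mathcomp Require Import all_classical all_reals all_analysis.
Set Implicit Arguments. Unset Strict Implicit. Unset Printing Implicit Defensive.
Import Order.TTheory GRing.Theory Num.Theory.
Local Open Scope classical_set_scope.
Local Open Scope ring_scope.

(* A learning rule on the measurable space T: for every n, a map
   (sample of n labelled points, query point) |-> label.  Samples
   Omega^n x {0,1}^n are encoded as n-tuples of pairs (T * bool). *)
Definition learning_rule (T : Type) := forall n : nat, n.-tuple (T * bool) -> T -> bool.

Definition is_learning_rule d (T : measurableType d) (L : learning_rule T) : Prop :=
  forall n, measurable_fun [set: n.-tuple (T * bool) * T]
                           (fun p : n.-tuple (T * bool) * T => L n p.1 p.2).

Fixpoint tuple_measure d (X : measurableType d) (R : realType)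
    (mu : {measure set X -> \bar R}) (n : nat) : set (n.-tuple X) -> \bar R :=
  match n with
  | 0 => fun A => ((\1_A : _ -> R) [tuple])%:E
  | n'.+1 => fun A =>
      (\int[mu]_x @tuple_measure d X R mu n' [set t : n'.-tuple X | A [tuple of x :: t]])%E
  end.
Arguments tuple_measure {d X R} mu n A.

(* err_mu(L_n) = (mu^n (x) mu) {(s, x, y) | L_n(s)(x) <> y} *)
Definition err d (T : measurableType d) (R : realType)
    (mu : probability (T * bool)%type R) (L : learning_rule T) (n : nat) : \bar R :=
  (\int[mu]_z tuple_measure mu n [set s : n.-tuple (T * bool) | L n s z.1 != z.2])%E.

Definition bayes_error d (T : measurableType d) (R : realType)
    (mu : probability (T * bool)%type R) : \bar R :=
  ereal_inf [set mu [set z | f z.1 != z.2] |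
             f in [set f : T -> bool | measurable_fun [set: T] f]].

Definition universally_consistent d (T : measurableType d) (R : realType)
    (L : learning_rule T) : Prop :=
  is_learning_rule L /\
  forall mu : probability (T * bool)%type R,
    err mu L n @[n --> \oo] --> bayes_error mu.

(* The measurable subspace (Y, A|_Y), for nonempty Y (MathComp measurable
   types must be pointed).  The proof hY is a phantom index. *)
Record subspace (T : Type) (Y : set T) (hY : Y !=set0) :=
  SubPt { subval : T ; subvalP : Y subval }.

Section subspace_inst.
Context d (T : measurableType d) (Y : set T) (hY : Y !=set0).

HB.instance Definition _ := gen_eqMixin (subspace hY).
HB.instance Definition _ := gen_choiceMixin (subspace hY).
HB.instance Definition _ :=
  isPointed.Build (subspace hY) (@SubPt T Y hY (projT1 (cid hY)) (projT2 (cid hY))).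

Definition subspace_measurable : set (set (subspace hY)) :=
  [set (@subval T Y hY) @^-1` A | A in measurable].

Lemma subspace_measurable0 : subspace_measurable set0.
Proof. by exists set0 => //; exact: measurable0. Qed.

Lemma subspace_measurableC A :
  subspace_measurable A -> subspace_measurable (~` A).
Proof.
by move=> [B mB <-]; exists (~` B); [exact: measurableC|].
Qed.

Lemma subspace_measurable_bigcup (F : (set (subspace hY))^nat) :
  (forall i, subspace_measurable (F i)) ->
  subspace_measurable (\bigcup_i F i).
Proof.
move=> mF; pose G i := projT1 (cid2 (mF i)).
exists (\bigcup_i G i).
  by apply: bigcupT_measurable => i; rewrite /G; case: cid2.
by rewrite preimage_bigcup; apply: eq_bigcupr => i _; rewrite /G; case: cid2.
Qed.

HB.instance Definition _ := @isMeasurable.Build d (subspace hY)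
  subspace_measurable subspace_measurable0 subspace_measurableC
  subspace_measurable_bigcup.
End subspace_inst.

Definition restrict_rule (T : Type) (Y : set T) (hY : Y !=set0)
    (L : learning_rule T) : learning_rule (subspace hY) :=
  fun n s x => L n [tuple of map (fun p : subspace hY * bool => (subval p.1, p.2)) s]
                 (subval x).
Arguments restrict_rule {T Y} hY L n s x.

From Pilot Require Import Defs.
From HB Require Import structures.
From mathcomp Require Import all_boot all_order all_algebra.
From mathcomp Require Import all_classical all_reals all_analysis.
From mathcomp Require Import measurable_realfun lebesgue_integral_fubini.
Local Open Scope classical_set_scope.
Local Open Scope ring_scope.

(* A distribution mu on Y x {0,1} pushes forward along the inclusion to a
   distribution nu on Omega x {0,1}.  The n-fold sample measure commutes with
   this pushforward, and L|_Y on samples from mu predicts exactly as L on their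
   images, so the errors of L|_Y under mu are those of L under nu.  Since A|_Y is
   the sigma-algebra induced by the inclusion, every measurable classifier on Y
   is the trace of one on Omega, so mu and nu also have the same Bayes error.
   Only these two properties of the inclusion are used, so the argument works
   for any measurable map inducing the sigma-algebra of its domain. *)

Section tuple_prob.
Context {d} {X : measurableType d} {R : realType} (mu : probability X R).

Definition cons_tuple n (p : X * n.-tuple X) : n.+1.-tuple X :=
  [tuple of p.1 :: p.2].

HB.instance Definition _ n := isMeasurableFun.Build _ _ _ _ (@cons_tuple n)
  (measurable_cons measurable_fst measurable_snd).

(* [tuple_measure] realised as an iterated product probability, so that the
   measurability of sections (Fubini) applies to it. *)
Fixpoint tuple_prob n : probability (n.-tuple X) R :=
  match n with
  | 0 => (\d_[tuple] : probability _ R)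
  | n'.+1 =>
      distribution ((mu \x tuple_prob n')%E : probability _ R) (@cons_tuple n')
  end.

Lemma xsection_cons_tuple n (A : set (n.+1.-tuple X)) x :
  xsection (@cons_tuple n @^-1` A) x = [set t : n.-tuple X | A [tuple of x :: t]].
Proof. by rewrite xsectionE. Qed.

Lemma tuple_probS n (A : set (n.+1.-tuple X)) :
  (tuple_prob n.+1 A =
   \int[mu]_x tuple_prob n [set t : n.-tuple X | A [tuple of x :: t]])%E.
Proof.
rewrite /= /distribution /pushforward /product_measure1.
by apply: eq_integral => x _; rewrite /= xsection_cons_tuple.
Qed.

Lemma measurable_fun_tuple_prob_cons n (A : set (n.+1.-tuple X)) :
  measurable A ->
  measurable_fun [set: X]
    (fun x : X => tuple_prob n [set t : n.-tuple X | A [tuple of x :: t]]).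
Proof.
move=> mA; under eq_fun do rewrite -xsection_cons_tuple.
exact/measurable_fun_xsection/measurable_funPTI.
Qed.

Lemma tuple_measureE n (A : set (n.-tuple X)) :
  measurable A -> tuple_measure mu n A = tuple_prob n A.
Proof.
elim: n A => [//|n IH] A mA; rewrite tuple_probS /=.
apply: eq_integral => x _; rewrite IH // -xsection_cons_tuple.
exact/measurable_xsection/measurable_funPTI.
Qed.

End tuple_prob.

Section tuple_prob_pushforward.
Context {d d'} {X : measurableType d} {Z : measurableType d'} {R : realType}.
Context (mu : probability X R) (F : {mfun X >-> Z}).

Lemma measurable_map_tuple n : measurable_fun [set: n.-tuple X] (map_tuple F).
Proof.
apply/measurable_fun_tnthP => i.
have -> : (@tnth n Z ^~ i) \o map_tuple F = F \o (@tnth n X ^~ i).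
  by apply/funext => t /=; rewrite tnth_map.
by apply: measurableT_comp => //; exact: measurable_tnth.
Qed.

HB.instance Definition _ n :=
  isMeasurableFun.Build _ _ _ _ (@map_tuple n _ _ F) (@measurable_map_tuple n).

Lemma tuple_prob_pushforward n (B : set (n.-tuple Z)) : measurable B ->
  tuple_prob (distribution mu F) n B = tuple_prob mu n (map_tuple F @^-1` B).
Proof.
elim: n B => [|n IH] B mB.
  rewrite /= !diracE; congr (nat_of_bool _)%:R%:E.
  by apply/idP/idP => /set_mem; rewrite /preimage /= tuple0 => ?;
    apply/mem_set; rewrite /= tuple0.
rewrite !tuple_probS ge0_integral_distribution //; last first.
  exact: measurable_fun_tuple_prob_cons.
apply: eq_integral => x _ /=; rewrite IH; last first.
  by rewrite -xsection_cons_tuple; exact/measurable_xsection/measurable_funPTI.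
have map_tuple_cons (t : n.-tuple X) :
    map_tuple F [tuple of x :: t] = [tuple of F x :: map_tuple F t].
  exact: val_inj.
by congr (tuple_prob mu n _); apply/seteqP; split => t; rewrite /= map_tuple_cons.
Qed.

End tuple_prob_pushforward.

Definition label_map {X Z : Type} (F : X -> Z) (p : X * bool) : Z * bool :=
  (F p.1, p.2).

Definition pullback_rule {X Z : Type} (F : X -> Z) (L : learning_rule Z) :
    learning_rule X :=
  fun n s x => L n (map_tuple (label_map F) s) (F x).

Definition misclassified {X : Type} (L : learning_rule X) n :
    set (n.-tuple (X * bool) * (X * bool)) :=
  [set p | L n p.1 p.2.1 != p.2.2].

Lemma measurable_fun_neqb {d} {X : measurableType d} (f g : X -> bool) :
  measurable_fun [set: X] f -> measurable_fun [set: X] g ->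
  measurable_fun [set: X] (fun x => f x != g x).
Proof.
move=> mf mg.
have -> : (fun x => f x != g x) = (fun x => (f x && ~~ g x) || (~~ f x && g x)).
  by apply/funext => x; case: (f x); case: (g x).
by apply: measurable_or; apply: measurable_and => //; exact: measurable_neg.
Qed.

Section learning_rule_misclassified.
Context {d} {X : measurableType d}.
Context {L : learning_rule X} (mL : is_learning_rule L).

Lemma measurable_misclassified n : measurable (misclassified L n).
Proof.
rewrite -[misclassified _ _]setTI -[misclassified _ _]/(_ @^-1` [set true]).
apply: measurable_fun_neqb => //; last by apply: measurableT_comp.
rewrite (_ : (fun p => _) = (fun q : n.-tuple (X * bool) * X => L n q.1 q.2) \o
  (fun p : n.-tuple (X * bool) * (X * bool) => (p.1, p.2.1))) //.
apply: measurableT_comp; first exact: mL.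
by apply: measurable_fun_pair => //; exact: measurableT_comp.
Qed.

Lemma errE {R : realType} (mu : probability (X * bool)%type R) n :
  err mu L n = (\int[mu]_z tuple_prob mu n (ysection (misclassified L n) z))%E.
Proof.
apply: eq_integral => z _; rewrite -tuple_measureE; first by rewrite ysectionE.
by apply: measurable_ysection; exact: measurable_misclassified.
Qed.

End learning_rule_misclassified.

Section pullback_rule.
Context {d d'} {X : measurableType d} {Z : measurableType d'}.
Context (F : {mfun X >-> Z}).

Lemma measurable_label_map : measurable_fun [set: X * bool] (label_map F).
Proof. by apply: measurable_fun_pair => //; apply: measurableT_comp. Qed.

HB.instance Definition _ :=
  isMeasurableFun.Build _ _ _ _ (label_map F) measurable_label_map.

Context (L : learning_rule Z) (mL : is_learning_rule L).

Lemma is_learning_rule_pullback : is_learning_rule (pullback_rule F L).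
Proof.
move=> n.
rewrite (_ : (fun p => _) = (fun q : n.-tuple (Z * bool) * Z => L n q.1 q.2) \o
  (fun p : n.-tuple (X * bool) * X => (map_tuple (label_map F) p.1, F p.2))) //.
apply: measurableT_comp; first exact: mL.
by apply: measurable_fun_pair; apply: measurableT_comp.
Qed.

Lemma ysection_misclassified_pullback n z :
  ysection (misclassified (pullback_rule F L) n) z =
  map_tuple (label_map F) @^-1` ysection (misclassified L n) (label_map F z).
Proof. by rewrite !ysectionE. Qed.

Lemma err_pullback {R : realType} (mu : probability (X * bool)%type R) n :
  err mu (pullback_rule F L) n = err (distribution mu (label_map F)) L n.
Proof.
rewrite (errE is_learning_rule_pullback) (errE mL).
rewrite ge0_integral_distribution //; last first.
  by apply: measurable_fun_ysection; exact: measurable_misclassified.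
apply: eq_integral => z _ /=; rewrite ysection_misclassified_pullback.
apply/esym/tuple_prob_pushforward.
by apply: measurable_ysection; exact: measurable_misclassified.
Qed.

End pullback_rule.

Section initial_map.
Context {d d'} {X : measurableType d} {Z : measurableType d'}.
Context (F : {mfun X >-> Z}).
Hypothesis F_initial : d.-measurable `<=` [set F @^-1` B | B in d'.-measurable].

Lemma measurable_bool_factor {f : X -> bool} : measurable_fun [set: X] f ->
  exists2 g : Z -> bool, measurable_fun [set: Z] g & f = g \o F.
Proof.
move=> mf.
have [B mB FB] : [set F @^-1` B | B in measurable] (f @^-1` [set true]).
  by apply: F_initial; rewrite -[_ @^-1` _]setTI; exact: mf.
exists (fun z => `[< B z >]).
  apply: (measurable_fun_bool true); rewrite setTI.
  by rewrite (_ : _ @^-1` _ = B) //; apply/seteqP; split => z /asboolP.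
apply/funext => x; apply/idP/asboolP => [fx | BFx].
- by have : (f @^-1` [set true]) x by []; rewrite -FB.
- by have : (F @^-1` B) x by []; rewrite FB.
Qed.

Lemma bayes_error_pullback {R : realType} (mu : probability (X * bool)%type R) :
  bayes_error mu = bayes_error (distribution mu (label_map F)).
Proof.
rewrite /bayes_error; congr ereal_inf; apply/seteqP; split => _ [f mf <-].
- by have [g mg ->] := measurable_bool_factor mf; exists g.
- by exists (f \o F) => //; exact: measurableT_comp.
Qed.

Lemma universally_consistent_pullback (R : realType) (L : learning_rule Z) :
  universally_consistent R L -> universally_consistent R (pullback_rule F L).
Proof.
move=> [mL cL]; split; first exact: is_learning_rule_pullback.
move=> mu; rewrite bayes_error_pullback.
by rewrite (funext (err_pullback F L mL mu)); exact: cL.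
Qed.

End initial_map.

Section subspace.
Context {d} {T : measurableType d} (Y : set T) (hY : Y !=set0).

Lemma measurable_subval : measurable_fun [set: Defs.subspace hY] (@subval T Y hY).
Proof. by move=> _ A mA; rewrite setTI; exists A. Qed.

HB.instance Definition _ :=
  isMeasurableFun.Build _ _ _ _ (@subval T Y hY) measurable_subval.

Lemma restrict_ruleE (L : learning_rule T) :
  restrict_rule hY L = pullback_rule (@subval T Y hY) L.
Proof. by []. Qed.

End subspace.

Theorem mainTheorem3 (R : realType) (d : measure_display) (T : measurableType d)
    (L : learning_rule T) :
  universally_consistent R L ->
  forall (Y : set T) (hY : Y !=set0),
    universally_consistent R (restrict_rule hY L).
Proof.
move=> cL Y hY; rewrite restrict_ruleE.
by apply: universally_consistent_pullback cL => A [B mB <-]; exists B.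
Qed.
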